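(* Let $m\ge 2$ be an integer. If $m$ is not a power of $2$, then the $m$-element subsets of a $2m$-element set $X$ can be coloured Red and Blue so that (i) complementary $m$-sets (i.e. $A$ and $X\setminus A$) receive distinct colours, and (ii) every point of $X$ is contained in the same number of Red sets as Blue sets. If $m$ is a power of $2$, then there is a Red–Blue colouring of the $m$-subsets of $X$ satisfying (i) such that for $m/2$ of the points of $X$, the number of Red sets containing the point exceeds the number of Blue sets containing it by $3$, and for the remaining $3m/2$ points, the number of Blue sets containing the point exceeds the number of Red sets containing it by $1$. *)

From mathcomp Require Import all_boot all_order all_algebra.
Set Implicit Arguments. Unset Strict Implicit. Unset Printing Implicit Defensive.

(* A Red-Blue colouring of subsets: c A = true means A is Red, false Blue.
   Only its values on m-subsets matter. *)

Definition red_deg (X : finType) (m : nat) (c : {set X} -> bool) (x : X) : nat :=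
  #|[set A : {set X} | (#|A| == m) && (x \in A) && c A]|.

Definition blue_deg (X : finType) (m : nat) (c : {set X} -> bool) (x : X) : nat :=
  #|[set A : {set X} | (#|A| == m) && (x \in A) && ~~ c A]|.

Definition antipodal (X : finType) (m : nat) (c : {set X} -> bool) : Prop :=
  forall A : {set X}, #|A| = m -> c (~: A) <> c A.

Definition is_pow2 (m : nat) : Prop := exists k : nat, m = 2 ^ k.

From mathcomp Require Import all_boot all_order all_algebra.
From mathcomp Require Import zify.
Import GRing.Theory.

Set Implicit Arguments.
Unset Strict Implicit.
Unset Printing Implicit Defensive.

(* Write m = k + 1 and identify X with [option 'I_N], N = 2k + 1.  An m-set containing
   [None] is the cone over a k-subset B of ['I_N]; colouring it like B, and every other m-set
   opposite to its complement, gives (i), and the Red sets at [Some y] then correspond to the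
   k-sets B with [(y \in B) == g B].  As k is invertible modulo N, translation acts freely on
   k-sets, with C(N, k) / N orbits, and an orbit of a single colour contributes k to one side
   and k + 1 to the other at every point.  By Lucas' theorem C(N, k) is odd exactly when m is
   a power of 2.  Otherwise half of the orbits are coloured Red.  If m = 2h, one orbit, the
   translates of {0, ..., k - 1}, is left over; colouring each translate by the parity of the
   shift gives the h points [Some y] with y odd and y >= k three more Red than Blue sets, and
   every other point one more Blue than Red set. *)

Lemma odd_bin_half n k : odd 'C(n, k) = (odd k ==> odd n) && odd 'C(n./2, k./2).
Proof.
elim/ltn_ind: n k => -[|[|n]] IH [|[|k]]; rewrite ?bin0 ?bin1 ?andbT ?bin0n ?andbF //.
rewrite !binS !oddD -addbA [X in _ (+) X]addbA addbb addFb.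
have half2 j : j.+2./2 = (j./2).+1 by [].
have odd2 j : odd j.+2 = odd j by rewrite /= negbK.
rewrite (IH n) // (IH n) // !half2 !odd2 -andb_addr -oddD -binS //.
Qed.

Lemma bin_double_diag r : 'C(r.+1.*2, r.+1) = 'C(r.*2.+1, r).*2.
Proof.
have e : r.*2.+1 - r = r.+1 by lia.
by rewrite doubleS binS -[in 'C(_, r.+1)]e bin_sub ?addnn //; lia.
Qed.

Lemma is_pow2_double r : is_pow2 r.*2 <-> is_pow2 r.
Proof.
split; last by case=> e ->; exists e.+1; rewrite expnS mul2n.
case=> -[|e] /= E; first by move: (odd_double r); rewrite E.
by exists e; apply: double_inj; rewrite E expnS mul2n.
Qed.

Lemma is_pow2_odd r : is_pow2 r.*2.+1 -> r = 0.
Proof.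
case=> -[|e]; first by case: r.
by rewrite expnS mul2n => /(congr1 odd); rewrite /= !odd_double.
Qed.

Lemma odd_bin_pow2 k : odd 'C(k.*2.+1, k) <-> is_pow2 k.+1.
Proof.
elim/ltn_ind: k => k IH.
rewrite odd_bin_half /= odd_double implybT uphalf_double /=.
have [s kE] : exists s, k = odd k + s.*2 by exists k./2; rewrite odd_double_half.
case: (odd k) in kE; rewrite {k}kE half_bit_double /= in IH *.
  by rewrite -doubleS is_pow2_double IH // ltnS -addnn leq_addr.
case: s {IH} => [|r]; first by split=> // _; exists 0.
by rewrite bin_double_diag odd_double; split=> // /is_pow2_odd.
Qed.

Lemma eq_card_bij (T T' : finType) : #|T| = #|T'| -> {f : T -> T' | bijective f}.
Proof.
move=> E; exists (fun x => enum_val (cast_ord E (enum_rank x))).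
exists (fun y => enum_val (cast_ord (esym E) (enum_rank y))) => z.
  by rewrite enum_valK cast_ordK enum_rankK.
by rewrite enum_valK cast_ordKV enum_rankK.
Qed.

Section Relabel.
Variables (X X' : finType) (f : X -> X').
Hypothesis f_bij : bijective f.

Let f_inj : injective f := bij_inj f_bij.

Lemma imset_bij : bijective (fun A : {set X} => f @: A).
Proof.
have [g fK gK] := f_bij; exists (fun A : {set X'} => g @: A) => A.
  by rewrite -imset_comp (eq_imset _ fK) imset_id.
by rewrite -imset_comp (eq_imset _ gK) imset_id.
Qed.

Lemma imsetC_bij (A : {set X}) : f @: (~: A) = ~: (f @: A).
Proof.
have [g fK gK] := f_bij.
by rewrite !(can2_imset_pre _ fK gK) preimsetC.
Qed.

Lemma antipodal_relabel m (c : {set X'} -> bool) :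
  antipodal m c -> antipodal m (fun A => c (f @: A)).
Proof. by move=> cA A cardA; rewrite imsetC_bij; apply: cA; rewrite card_imset. Qed.

Lemma red_deg_relabel m (c : {set X'} -> bool) x :
  red_deg m (fun A => c (f @: A)) x = red_deg m c (f x).
Proof.
rewrite /red_deg -(on_card_preimset (onW_bij _ imset_bij)).
by apply: eq_card => A; rewrite !inE card_imset ?mem_imset.
Qed.

Lemma blue_deg_relabel m (c : {set X'} -> bool) x :
  blue_deg m (fun A => c (f @: A)) x = blue_deg m c (f x).
Proof. exact: (red_deg_relabel m (fun A => ~~ c A)). Qed.

End Relabel.

Lemma card_set_split {T : finType} (P Q : pred T) :
  #|[set x | P x]| = #|[set x | P x && Q x]| + #|[set x | P x && ~~ Q x]|.
Proof.
rewrite -(cardsID [set x | Q x]).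
by congr (_ + _); apply: eq_card => x; rewrite !inE // andbC.
Qed.

Lemma card_ord_count n (P : pred nat) : #|[set i : 'I_n | P i]| = count P (iota 0 n).
Proof. by rewrite cardsE cardE /enum_mem -enumT size_filter -val_enum_ord count_map. Qed.

Lemma count_odd_geq t a l :
  count (fun i => (t <= i) && odd i) (iota a l) = (a + l) %/ 2 - maxn a t %/ 2.
Proof.
elim: l => [|l IH]; first by rewrite addn0 /=; lia.
rewrite -addn1 iotaD count_cat IH /=.
by case: (leqP t (a + l)) => /=; case: (boolP (odd (a + l))) => /=; lia.
Qed.

Lemma exists_subset_card (T : finType) (A : {set T}) n :
  n <= #|A| -> exists2 B : {set T}, B \subset A & #|B| = n.
Proof.
elim: n => [|n IH] leA; first by exists set0; rewrite ?sub0set ?cards0.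
have [B BA cardB] := IH (ltnW leA).
have /properP[_ [x xA xB]] : B \proper A by rewrite properEcard BA cardB.
by exists (x |: B); rewrite ?subUset ?sub1set ?xA ?BA // cardsU1 xB cardB.
Qed.

Lemma card_set_sum_nat (T : finType) (p : pred T) : #|[set x | p x]| = \sum_x p x.
Proof. by rewrite -sum1_card big_mkcond; apply: eq_bigr => x _; rewrite inE; case: (p x). Qed.

Lemma card_eqb_add (T : finType) (p q : pred T) :
  #|[set x | p x == q x]| + #|[set x | p x]| + #|[set x | q x]| =
  #|T| + 2 * #|[set x | p x && q x]|.
Proof.
rewrite !card_set_sum_nat -sum1_card big_distrr -!big_split.
by apply: eq_bigr => x _; case: (p x); case: (q x).
Qed.

Lemma card_eqbN_add (T : finType) (p q : pred T) :
  #|[set x | p x == ~~ q x]| + 2 * #|[set x | p x && q x]| =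
  #|[set x | p x]| + #|[set x | q x]|.
Proof.
rewrite !card_set_sum_nat big_distrr -!big_split.
by apply: eq_bigr => x _; case: (p x); case: (q x).
Qed.

Lemma sum_nat_if_mem (T : finType) (A B : {set T}) a b :
  \sum_(x in A) (if x \in B then a else b) = #|A :&: B| * a + #|A :\: B| * b.
Proof.
rewrite (bigID (mem B)) /= -!sum_nat_const; congr (_ + _).
  by apply: eq_big => [x|x /andP[_ ->]]; rewrite ?inE.
by apply: eq_big => [x|x /andP[_ /negbTE->]]; rewrite ?inE // andbC.
Qed.

Lemma count_ltn_iota t n : count (fun i => i < t) (iota 0 n) = minn t n.
Proof.
elim: n => [|n IH]; first by rewrite minn0.
by rewrite -addn1 iotaD count_cat IH /= add0n; case: (ltnP n t) => /=; lia.
Qed.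

Lemma val_sub_ord n (y e : 'I_n.+1) : val (y - e)%R = if e <= y then y - e else y + n.+1 - e.
Proof.
have ltyn := ltn_ord y; have lten := ltn_ord e.
rewrite /= modnDmr; case: leqP => le_ey.
  by rewrite (_ : y + _ = y - e + n.+1) ?modnDr ?modn_small //; lia.
by rewrite modn_small; lia.
Qed.

Section Cone.
Variables (Y : finType) (k : nat).
Hypothesis cardY : #|Y| = k.*2.+1.
Implicit Types (B : {set Y}) (A : {set option Y}).

Definition cone B : {set option Y} := None |: (Some @: B).
Definition base A : {set Y} := [set y | Some y \in A].

Lemma in_cone_Some y B : (Some y \in cone B) = (y \in B).
Proof. by rewrite !inE (mem_imset _ _ (@Some_inj _)). Qed.

Lemma in_cone_None B : None \in cone B.
Proof. by rewrite !inE. Qed.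

Lemma coneK : cancel cone base.
Proof. by move=> B; apply/setP => y; rewrite inE in_cone_Some. Qed.

Lemma baseK A : None \in A -> cone (base A) = A.
Proof. by move=> AN; apply/setP => -[y|]; rewrite ?in_cone_Some ?inE ?in_cone_None. Qed.

Lemma card_cone B : #|cone B| = #|B|.+1.
Proof.
rewrite cardsU1 card_imset; last exact: Some_inj.
by rewrite (_ : None \notin _) //; apply/imsetP => -[].
Qed.

Lemma card_coneC B : #|~: cone B| = #|Y| - #|B|.
Proof. by rewrite cardsCs setCK card_option card_cone. Qed.

Lemma card_halfsets_cone (F : pred {set option Y}) :
  #|[set A : {set option Y} | (#|A| == k.+1) && F A]| =
  #|[set B : {set Y} | (#|B| == k) && F (cone B)]| +
  #|[set B : {set Y} | (#|B| == k) && F (~: cone B)]|.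
Proof.
rewrite (card_set_split (fun A => (#|A| == k.+1) && F A) (fun A => None \in A)).
congr (_ + _).
  rewrite -(card_imset _ (can_inj coneK)); apply: eq_card => A; rewrite !inE.
  apply/idP/imsetP => [/andP[/andP[cardA FA] AN] | [B]].
    exists (base A); last by rewrite baseK.
    by rewrite inE baseK // FA andbT -eqSS -card_cone baseK.
  by rewrite inE => + ->; rewrite card_cone eqSS in_cone_None andbT.
have coneC_inj : injective (fun B => ~: cone B) by move=> B B' /setC_inj/(can_inj coneK).
rewrite -(card_imset _ coneC_inj); apply: eq_card => A; rewrite !inE.
apply/idP/imsetP => [/andP[/andP[cardA FA] AN] | [B]].
  have ACN : None \in ~: A by rewrite inE.
  exists (base (~: A)); last by rewrite baseK ?setCK.
  rewrite inE baseK // setCK FA andbT -eqSS -card_cone baseK // cardsCs setCK.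
  by rewrite card_option cardY (eqP cardA); apply/eqP; lia.
rewrite inE => /andP[cardB FB] ->.
by rewrite card_coneC cardY (eqP cardB) in_setC in_cone_None FB andbT; apply/eqP; lia.
Qed.

Definition cone_colouring (g : {set Y} -> bool) A :=
  if None \in A then g (base A) else ~~ g (base (~: A)).

Lemma cone_colouring_cone g B : cone_colouring g (cone B) = g B.
Proof. by rewrite /cone_colouring in_cone_None coneK. Qed.

Lemma cone_colouring_coneC g B : cone_colouring g (~: cone B) = ~~ g B.
Proof. by rewrite /cone_colouring in_setC in_cone_None setCK coneK. Qed.

Lemma antipodal_cone_colouring m g : antipodal m (cone_colouring g).
Proof.
move=> A _; rewrite /cone_colouring in_setC setCK.
by case: (None \in A) => /=; [case: (g (base A)) | case: (g (base (~: A)))].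
Qed.

Lemma blue_deg_cone_colouring g x :
  blue_deg k.+1 (cone_colouring g) x = red_deg k.+1 (cone_colouring (fun B => ~~ g B)) x.
Proof.
rewrite /blue_deg /red_deg; apply: eq_card => A; rewrite !inE /cone_colouring.
by case: (None \in A); rewrite ?negbK.
Qed.

Lemma red_deg_cone_colouring_Some g y :
  red_deg k.+1 (cone_colouring g) (Some y) =
  #|[set B : {set Y} | (#|B| == k) && ((y \in B) == g B)]|.
Proof.
rewrite /red_deg (eq_card (B := [set A : {set option Y} |
  (#|A| == k.+1) && ((Some y \in A) && cone_colouring g A)])); last first.
  by move=> A; rewrite !inE andbA.
rewrite card_halfsets_cone [RHS](card_set_split _ (fun B => y \in B)).
congr (_ + _); apply: eq_card => B; rewrite !(in_set _ B) ?in_setC in_cone_Some.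
  by rewrite cone_colouring_cone; case: (y \in B); case: (g B); rewrite /= ?andbT ?andbF.
by rewrite cone_colouring_coneC; case: (y \in B); case: (g B); rewrite /= ?andbT ?andbF.
Qed.

Lemma red_deg_cone_colouring_None g :
  red_deg k.+1 (cone_colouring g) None = #|[set B : {set Y} | (#|B| == k) && g B]|.
Proof.
rewrite /red_deg (eq_card (B := [set A : {set option Y} |
  (#|A| == k.+1) && ((None \in A) && cone_colouring g A)])); last first.
  by move=> A; rewrite !inE andbA.
rewrite card_halfsets_cone -[RHS]addn0; congr (_ + _).
  by apply: eq_card => B; rewrite !(in_set _ B) in_cone_None cone_colouring_cone.
apply/eqP; rewrite cards_eq0; apply/eqP/setP => B.
by rewrite in_set0 (in_set _ B) in_setC in_cone_None /= andbF.
Qed.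

End Cone.

Section Orbits.
Variable k : nat.
Local Notation N := k.*2.+1.
Local Notation Y := 'I_N.
Local Open Scope ring_scope.
Implicit Types (A S : {set Y}) (e y : Y).

Definition shift A e : {set Y} := [set x | x - e \in A].

(* -2 is the inverse of k modulo N = 2k+1, so shifting a k-set by e adds e to its offset. *)
Definition offset A : Y := - ((\sum_(a in A) a) *+ 2).

Definition normal_form A := shift A (- offset A).

Definition reps := [set S : {set Y} | (#|S| == k) && (offset S == 0)].

Lemma in_shift x A e : (x \in shift A e) = (x - e \in A).
Proof. by rewrite inE. Qed.

Lemma card_shift A e : #|shift A e| = #|A|.
Proof.
rewrite (_ : shift A e = (fun x => x - e) @^-1: A); last by apply/setP => x; rewrite !inE.
by apply: card_preimset => x x' /addIr.
Qed.

Lemma shiftD A e e' : shift (shift A e) e' = shift A (e + e').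
Proof. by apply/setP => x; rewrite !in_shift opprD addrA [_ - e' - e]addrAC. Qed.

Lemma shift0 A : shift A 0 = A.
Proof. by apply/setP => x; rewrite in_shift subr0. Qed.

Lemma mulrn_order e : e *+ N = 0.
Proof. by apply: val_inj; rewrite Zp_mulrn /= modnMl. Qed.

Lemma offset_shift A e : #|A| = k -> offset (shift A e) = offset A + e.
Proof.
move=> cardA; rewrite /offset (reindex_inj (addIr e)) /=.
rewrite (eq_bigl (mem A)) => [|a]; last by rewrite /= in_shift addrK.
rewrite big_split sumr_const cardA /= mulrnDl opprD; congr (_ + _).
by apply/eqP; rewrite -mulrnA muln2 eqr_oppLR -subr_eq0 opprK -mulrSr mulrn_order.
Qed.

Lemma shift_normal_form A : shift (normal_form A) (offset A) = A.
Proof. by rewrite shiftD addNr shift0. Qed.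

Lemma normal_form_shift A e : #|A| = k -> normal_form (shift A e) = normal_form A.
Proof. by move=> cardA; rewrite /normal_form offset_shift // shiftD opprD addrCA subrr addr0. Qed.

Lemma normal_form_reps A : #|A| = k -> normal_form A \in reps.
Proof.
by move=> cardA; rewrite inE card_shift cardA eqxx offset_shift // addrN.
Qed.

Lemma reps_card S : S \in reps -> #|S| = k.
Proof. by rewrite inE => /andP[/eqP]. Qed.

Lemma offset_shift_reps S e : S \in reps -> offset (shift S e) = e.
Proof.
move=> SR; rewrite offset_shift ?reps_card //.
by move: SR; rewrite inE => /andP[_ /eqP->]; rewrite add0r.
Qed.

Lemma normal_form_shift_reps S e : S \in reps -> normal_form (shift S e) = S.
Proof.
by move=> SR; rewrite /normal_form offset_shift_reps // shiftD subrr shift0.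
Qed.

Lemma card_ksets_orbits (P : pred {set Y}) :
  #|[set B : {set Y} | (#|B| == k) && P B]| = (\sum_(S in reps) #|[set e | P (shift S e)]|)%N.
Proof.
rewrite -sum1_card (partition_big normal_form (mem reps)) /= => [|B]; last first.
  by rewrite inE => /andP[/eqP/normal_form_reps].
apply: eq_bigr => S SR; rewrite -sum1_card (reindex_onto (shift S) offset) /= => [|B].
  apply: eq_bigl => e; rewrite !inE card_shift reps_card // eqxx /=.
  by rewrite normal_form_shift_reps // offset_shift_reps // !eqxx !andbT.
by rewrite inE => /andP[/andP[_ _] /eqP<-]; rewrite shift_normal_form.
Qed.

Lemma card_shift_mem y S : #|[set e | y \in shift S e]| = #|S|.
Proof.
rewrite -[RHS](card_preimset _ (inv_inj (subKr y))); apply: eq_card => e.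
by rewrite !inE.
Qed.

Lemma card_shift_normal_form A (P : pred {set Y}) :
  #|[set e | P (shift (normal_form A) e)]| = #|[set e | P (shift A e)]|.
Proof.
rewrite -[RHS](card_preimset _ (addrI (- offset A))); apply: eq_card => e.
by rewrite !inE shiftD.
Qed.

Lemma reps_card_binomial : (#|reps| * N)%N = 'C(N, k).
Proof.
rewrite -[in RHS](card_ord N) -card_draws.
have -> : [set B : {set Y} | #|B| == k] = [set B : {set Y} | (#|B| == k) && true].
  by apply/setP => B; rewrite !inE andbT.
rewrite [RHS]card_ksets_orbits -sum_nat_const; apply: eq_bigr => S _.
by rewrite cardsT card_ord.
Qed.

Lemma odd_card_reps : odd #|reps| = odd 'C(N, k).
Proof. by rewrite -reps_card_binomial oddM /= odd_double andbT. Qed.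

Definition block : {set Y} := [set i : Y | (i < k)%N].

Definition block_rep := normal_form block.

Lemma card_block : #|block| = k.
Proof. by rewrite /block (card_ord_count _ (fun i => i < k)%N) count_ltn_iota; lia. Qed.

Lemma block_rep_reps : block_rep \in reps.
Proof. exact/normal_form_reps/card_block. Qed.

Lemma shift_block_inj : injective (shift block).
Proof. by move=> e e' /(congr1 offset); rewrite !offset_shift ?card_block //; apply: addrI. Qed.

Lemma card_shift_mem_eqb y S b : #|S| = k ->
  #|[set e | (y \in shift S e) == b]| = if b then k else k.+1.
Proof.
move=> cardS; have := cardsC [set e | y \in shift S e].
rewrite card_shift_mem cardS card_ord; case: b => /= cardC.
  by rewrite -[RHS]cardS -(card_shift_mem y); apply: eq_card => e; rewrite !inE eqb_id.
rewrite (eq_card (B := ~: [set e | y \in shift S e])) => [|e]; last by rewrite !inE eqbF_neg.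
by move: cardC; move: #|_| => c; rewrite -addnn; lia.
Qed.

Lemma card_odd_ord : #|[set e : Y | odd e]| = k.
Proof.
rewrite (card_ord_count _ odd) (eq_count (a2 := fun i => (0 <= i) && odd i))%N //.
by rewrite count_odd_geq; lia.
Qed.

Lemma card_shift_block_odd y h : k.+1 = h.*2 ->
  #|[set e : Y | (y \in shift block e) && odd e]| = if (k <= y)%N && odd y then h else h.-1.
Proof.
move=> kh; have yN := ltn_ord y.
pose P i := (((if i <= y then y - i else y + N - i) < k) && odd i)%N.
rewrite (eq_card (B := [set e : Y | P e])) => [|e]; last by rewrite !inE val_sub_ord.
rewrite (card_ord_count _ P) -[X in iota _ X](subnKC yN) iotaD count_cat add0n.
rewrite (@eq_in_count _ P (fun i => (y.+1 - k <= i) && odd i)%N) => [|i]; last first.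
  rewrite mem_iota /P => /andP[_ iy]; have -> : (i <= y)%N by lia.
  by congr (_ && _); apply/idP/idP; lia.
rewrite (@eq_in_count _ P (fun i => (y + N + 1 - k <= i) && odd i)%N) => [|i]; last first.
  rewrite mem_iota subnKC // /P => /andP[yi _]; have -> : (i <= y)%N = false by lia.
  by congr (_ && _); apply/idP/idP; lia.
rewrite !count_odd_geq subnKC //.
by case: (boolP (odd y)) => oy; case: (leqP k y) => ky /=; lia.
Qed.

Section OrbitwiseColouring.
Variables (g : {set Y} -> bool) (chi : {set Y} -> bool) (phi : Y -> bool).
Hypothesis g_reps : forall S e, S \in reps :\ block_rep -> g (shift S e) = chi S.
Hypothesis g_block : forall e, g (shift block e) = phi e.

Let cardY : #|Y| = N := card_ord N.

Lemma red_deg_orbitwise_Some y :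
  red_deg k.+1 (cone_colouring g) (Some y) =
  (#|[set e | (y \in shift block e) == phi e]| +
   \sum_(S in reps :\ block_rep) if chi S then k else k.+1)%N.
Proof.
rewrite red_deg_cone_colouring_Some // card_ksets_orbits (big_setD1 _ block_rep_reps).
congr (_ + _).
  rewrite (card_shift_normal_form _ (fun B => (y \in B) == g B)).
  by apply: eq_card => e; rewrite !inE g_block.
apply: eq_bigr => S SR; have /setD1P[_ /reps_card cardS] := SR.
rewrite -(card_shift_mem_eqb y _ cardS).
by apply: eq_card => e; rewrite !inE g_reps.
Qed.

Lemma red_deg_orbitwise_None :
  red_deg k.+1 (cone_colouring g) None =
  (#|[set e | phi e]| + \sum_(S in reps :\ block_rep) if chi S then N else 0)%N.
Proof.
rewrite red_deg_cone_colouring_None // card_ksets_orbits (big_setD1 _ block_rep_reps).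
congr (_ + _).
  rewrite (card_shift_normal_form _ g).
  by apply: eq_card => e; rewrite !inE g_block.
apply: eq_bigr => S SR.
rewrite (eq_card (B := [set e : Y | chi S])) => [|e]; last by rewrite !inE g_reps.
case: (chi S); last by apply/eqP; rewrite cards_eq0; apply/eqP/setP => e; rewrite !inE.
by rewrite -[RHS](card_ord N) -cardsT; apply: eq_card => e; rewrite !inE.
Qed.

End OrbitwiseColouring.

Definition orbit_colouring (R : {set {set Y}}) (Phi : {set Y}) B :=
  (normal_form B \in R) || (B \in shift block @: Phi).

Lemma orbit_colouring_reps (R : {set {set Y}}) (Phi : {set Y}) S e :
  S \in reps :\ block_rep -> orbit_colouring R Phi (shift S e) = (S \in R).
Proof.
case/setD1P=> SnB SR; rewrite /orbit_colouring normal_form_shift_reps // orbC.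
case: imsetP => // -[e' _ /(congr1 normal_form)].
rewrite normal_form_shift_reps // normal_form_shift ?card_block // => SB.
by rewrite SB eqxx in SnB.
Qed.

Lemma orbit_colouring_block (R : {set {set Y}}) (Phi : {set Y}) e :
  block_rep \notin R -> orbit_colouring R Phi (shift block e) = (e \in Phi).
Proof.
move=> BR; rewrite /orbit_colouring normal_form_shift ?card_block // (negbTE BR).
by rewrite mem_imset //; exact: shift_block_inj.
Qed.

Section OrbitColouring.
Variables (R : {set {set Y}}) (Phi : {set Y}).
Hypothesis R_sub : R \subset reps :\ block_rep.
Let c := cone_colouring (orbit_colouring R Phi).
Let r := #|R|.
Let r' := #|reps :\ block_rep :\: R|.

Let block_repNR : block_rep \notin R.
Proof. by apply/negP => /(subsetP R_sub); rewrite setD11. Qed.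

Let sum_orbits a b :
  (\sum_(S in reps :\ block_rep) if S \in R then a else b)%N = (r * a + r' * b)%N.
Proof. by rewrite sum_nat_if_mem (setIidPr R_sub). Qed.

Lemma red_deg_orbit_colouring_Some y :
  red_deg k.+1 c (Some y) =
  (#|[set e | (y \in shift block e) == (e \in Phi)]| + r * k + r' * k.+1)%N.
Proof.
rewrite (red_deg_orbitwise_Some (chi := mem R) (phi := mem Phi)) ?sum_orbits ?addnA //.
  exact: orbit_colouring_reps.
by move=> e; apply: orbit_colouring_block.
Qed.

Lemma blue_deg_orbit_colouring_Some y :
  blue_deg k.+1 c (Some y) =
  (#|[set e | (y \in shift block e) == (e \notin Phi)]| + r * k.+1 + r' * k)%N.
Proof.
rewrite blue_deg_cone_colouring ?card_ord //.
rewrite (red_deg_orbitwise_Some (chi := fun S => S \notin R) (phi := fun e => e \notin Phi))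
  => [|S e|e].
- rewrite (eq_bigr (fun S => if S \in R then k.+1 else k)) ?sum_orbits ?addnA // => S _.
  by case: (S \in R).
- by move=> SR; rewrite orbit_colouring_reps.
by rewrite orbit_colouring_block.
Qed.

Lemma red_deg_orbit_colouring_None : red_deg k.+1 c None = (#|Phi| + r * N)%N.
Proof.
rewrite (red_deg_orbitwise_None (chi := mem R) (phi := mem Phi)) => [|S e|e].
- by rewrite (eq_bigr (fun S => if S \in R then N else 0)) // sum_orbits muln0 addn0 cardsE.
- exact: orbit_colouring_reps.
exact: orbit_colouring_block.
Qed.

Lemma blue_deg_orbit_colouring_None : blue_deg k.+1 c None = (#|~: Phi| + r' * N)%N.
Proof.
rewrite blue_deg_cone_colouring ?card_ord //.
rewrite (red_deg_orbitwise_None (chi := fun S => S \notin R) (phi := fun e => e \notin Phi))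
  => [|S e|e].
- rewrite (eq_bigr (fun S => if S \in R then 0 else N)) ?sum_orbits ?muln0 => [|S _].
    by congr (_ + _); apply: eq_card => e; rewrite !inE.
  by case: (S \in R).
- by move=> SR; rewrite orbit_colouring_reps.
by rewrite orbit_colouring_block.
Qed.

End OrbitColouring.

Lemma split_other_reps : exists2 R : {set {set Y}}, R \subset reps :\ block_rep &
  #|reps :\ block_rep :\: R| = (#|R| + ~~ odd #|reps|)%N.
Proof.
have [R RZ cardR] := exists_subset_card (leq_div (#|reps :\ block_rep|) 2).
exists R; rewrite // cardsD (setIidPr RZ) cardR (cardsD1 block_rep reps) block_rep_reps.
by move: #|_| => z; case: (boolP (odd z)) => /= oz; lia.
Qed.

Lemma balanced_colouring : ~~ odd #|reps| ->
  exists g : {set Y} -> bool, forall x,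
    red_deg k.+1 (cone_colouring g) x = blue_deg k.+1 (cone_colouring g) x.
Proof.
move=> evenZ; have [R RZ] := split_other_reps; rewrite evenZ addn1 => cardRc.
exists (orbit_colouring R setT) => -[y|].
  have blockT : #|[set e | (y \in shift block e) == (e \in setT)]| = k.
    by apply: etrans (card_shift_mem_eqb y true card_block); apply: eq_card => e; rewrite !inE.
  have blockF : #|[set e | (y \in shift block e) == (e \notin setT)]| = k.+1.
    by apply: etrans (card_shift_mem_eqb y false card_block); apply: eq_card => e; rewrite !inE.
  rewrite red_deg_orbit_colouring_Some // blue_deg_orbit_colouring_Some // cardRc blockT blockF.
  by move: #|R| => r; nia.
rewrite red_deg_orbit_colouring_None // blue_deg_orbit_colouring_None // cardRc.
by rewrite setCT cards0 cardsT card_ord add0n mulSn.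
Qed.

Lemma deg_parity_colouring_Some (R : {set {set Y}}) y :
  R \subset reps :\ block_rep ->
  let c := cone_colouring (orbit_colouring R [set e : Y | odd e]) in
  let a := #|[set e | (y \in shift block e) && odd e]| in
  red_deg k.+1 c (Some y) = (a.*2.+1 + #|R| * k + #|reps :\ block_rep :\: R| * k.+1)%N /\
  blue_deg k.+1 c (Some y) = ((k - a).*2 + #|R| * k.+1 + #|reps :\ block_rep :\: R| * k)%N.
Proof.
move=> RZ c a; rewrite red_deg_orbit_colouring_Some // blue_deg_orbit_colouring_Some //.
have := card_eqb_add (fun e => y \in shift block e) (fun e => e \in [set e : Y | odd e]).
have := card_eqbN_add (fun e => y \in shift block e) (fun e => e \in [set e : Y | odd e]).
rewrite (eq_card (A := [set e | (y \in shift block e) && (e \in [set e : Y | odd e])])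
                 (B := [set e | (y \in shift block e) && odd e])) => [|e]; last by rewrite !inE.
have cardPhi : #|[set e | e \in [set e : Y | odd e]]| = k.
  by rewrite -[RHS]card_odd_ord; apply: eq_card => e; rewrite !inE.
rewrite -/a card_shift_mem card_block cardPhi card_ord.
move: #|[set e | (y \in shift block e) == (e \notin [set e : Y | odd e])]| => b.
move: #|[set e | (y \in shift block e) == (e \in [set e : Y | odd e])]| => b'.
by move: #|R| #|reps :\ block_rep :\: R| => r r'; rewrite -!addnn; split; lia.
Qed.

Lemma pow2_colouring h : k.+1 = h.*2 -> odd #|reps| ->
  exists g : {set Y} -> bool, exists P : {set option Y},
    #|P| = h /\
    (forall x, x \in P ->
       red_deg k.+1 (cone_colouring g) x = (blue_deg k.+1 (cone_colouring g) x + 3)%N) /\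
    (forall x, x \notin P ->
       blue_deg k.+1 (cone_colouring g) x = (red_deg k.+1 (cone_colouring g) x + 1)%N).
Proof.
move=> kh oddZ; have [R RZ] := split_other_reps; rewrite oddZ addn0 => cardRc.
exists (orbit_colouring R [set e : Y | odd e]), (Some @: [set y : Y | (k <= y)%N && odd y]).
split.
  rewrite card_imset; last exact: Some_inj.
  rewrite (card_ord_count _ (fun i => (k <= i) && odd i)%N) count_odd_geq.
  by move: kh; rewrite -!addnn; lia.
split=> [x /imsetP[y]|[y|] yP].
- rewrite inE => ycond ->; have [-> ->] := deg_parity_colouring_Some y RZ.
  rewrite cardRc (card_shift_block_odd y kh) ycond.
  by move: kh; rewrite -!addnn; lia.
- have ycond : ((k <= y) && odd y)%N = false.
    by apply/negbTE; apply: contra yP => ycond; apply/imsetP; exists y; rewrite ?inE.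
  have [-> ->] := deg_parity_colouring_Some y RZ.
  rewrite cardRc (card_shift_block_odd y kh) ycond.
  by move: kh; rewrite -!addnn; lia.
rewrite red_deg_orbit_colouring_None // blue_deg_orbit_colouring_None // cardRc.
have := cardsC [set e : Y | odd e]; rewrite card_odd_ord card_ord.
by move: #|~: _| #|R| => c r; rewrite -addnn; lia.
Qed.

End Orbits.

Theorem theorem1p5 (m : nat) (hm : 2 <= m) (X : finType) (hX : #|X| = 2 * m) :
  (~ is_pow2 m ->
     exists c : {set X} -> bool,
       antipodal m c /\ forall x : X, red_deg m c x = blue_deg m c x)
  /\
  (is_pow2 m ->
     exists c : {set X} -> bool,
       antipodal m c /\
       exists P : {set X},
         #|P| = m %/ 2 /\
         (forall x : X, x \in P -> red_deg m c x = blue_deg m c x + 3) /\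
         (forall x : X, x \notin P -> blue_deg m c x = red_deg m c x + 1)).
Proof.
case: m hm hX => [|k] // hm hX.
have [f f_bij] : {f : X -> option 'I_k.*2.+1 | bijective f}.
  by apply: eq_card_bij; rewrite card_option card_ord hX -addnn; lia.
have parity := odd_bin_pow2 k; rewrite -odd_card_reps in parity.
split=> [not_pow2 | pow2].
  have [|g balanced] := balanced_colouring (k := k); first by apply/negP => /parity.
  exists (fun A : {set X} => cone_colouring g (f @: A)).
  split=> [|x]; first exact/antipodal_relabel/antipodal_cone_colouring.
  by rewrite red_deg_relabel // blue_deg_relabel // balanced.
have [[|e] E] := pow2; first by rewrite E in hm.
have kh : k.+1 = (2 ^ e).*2 by rewrite E expnS mul2n.
have [g [P [cardP [inP notinP]]]] := pow2_colouring kh (proj2 parity pow2).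
exists (fun A : {set X} => cone_colouring g (f @: A)).
split; first exact/antipodal_relabel/antipodal_cone_colouring.
exists (f @^-1: P); split.
  by rewrite on_card_preimset ?cardP ?kh -?muln2 ?mulnK //; exact: onW_bij.
split=> x; rewrite inE => xP.
  by rewrite red_deg_relabel // blue_deg_relabel // inP.
by rewrite red_deg_relabel // blue_deg_relabel // notinP.
Qed.
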